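(* Let $h,\Gamma,\rho_0$ be $C^2$ functions on the circle $\mathbb{T}^1$ with $h>0$, $\Gamma>0$ everywhere and $\rho_0 = c/h$ for a constant $c>0$. For $\epsilon>0$ let $r_\epsilon$ be a $C^2$ solution of $$\frac{\epsilon}{2}(\Gamma r_\epsilon)'' - (h r_\epsilon)' = -\frac{\epsilon}{2}(\Gamma\rho_0)'' \quad\text{on } \mathbb{T}^1,\qquad \int_{\mathbb{T}^1} r_\epsilon\,dx = 0.$$ Then there exist $\epsilon_0>0$ and a constant $C$ (depending only on $h,\Gamma,\rho_0$) such that $\|r_\epsilon'\|_{L^2(\mathbb{T}^1)}\le C\epsilon$ for all $0<\epsilon<\epsilon_0$. Explicitly, with $\alpha=\min h$ and, if $\Gamma$ is nonconstant, $\beta = \max\big(|h'| + \frac{\alpha}{3\max\Gamma'}|\Gamma''|\big)$ (and $\beta=\max|h'|$ if $\Gamma$ is constant), one has for $0<\epsilon<2\alpha/(3\max\Gamma')$ (all $\epsilon>0$ if $\Gamma$ is constant) $$\|r_\epsilon'\|_{L^2}\le \epsilon\Big(\frac{2\beta}{\alpha^2}\|(\Gamma\rho_0)'\|_{L^2} + \frac{1}{\alpha}\|(\Gamma\rho_0)''\|_{L^2}\Big).$$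
   Context: Here $r_\epsilon=\rho_\epsilon-\rho_0$, where $\rho_0=c/h$ is the invariant density of $\dot x=h(x)$ on the circle and $\rho_\epsilon$ the stationary density of $dx = h\,dt+\sqrt\epsilon\,\gamma(x)\circ dW$ with $\Gamma=\gamma^2$. Primes denote derivatives on $\mathbb{T}^1$. *)

From Stdlib Require Import Reals.
Open Scope R_scope.

(* Functions on the circle T^1 = R/Z are modelled as 1-periodic functions R -> R. *)
Definition periodic1 (f : R -> R) : Prop := forall x, f (x + 1) = f x.

Definition is_C1 (f f1 : R -> R) : Prop :=
  (forall x, derivable_pt_lim f x (f1 x)) /\ continuity f1.

Definition is_C2 (f f1 f2 : R -> R) : Prop :=
  (forall x, derivable_pt_lim f x (f1 x)) /\
  (forall x, derivable_pt_lim f1 x (f2 x)) /\ continuity f2.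

Definition is_max (f : R -> R) (m : R) : Prop :=
  (forall x, f x <= m) /\ exists x, f x = m.
Definition is_min (f : R -> R) (m : R) : Prop :=
  (forall x, m <= f x) /\ exists x, f x = m.

Definition L2norm (f : R -> R) (pr : Riemann_integrable (fun x => f x ^ 2) 0 1) : R :=
  sqrt (RiemannInt pr).

From Stdlib Require Import Reals Lra Psatz Classical FunctionalExtensionality.
From Coquelicot Require Import Coquelicot.
Open Scope R_scope.

(* The equation eps/2 (Gam r)'' - (h r)' = -eps/2 Q'' (Q = Gam rho0) is integrated
   once, giving a constant flux eps/2 (Gam r)' - h r + eps/2 Q'.  Testing it against
   r (which has mean zero) and integrating by parts, int Gam r r' = -1/2 int Gam' r^2,
   yields  int (h - eps Gam'/4) r^2 = eps/2 int Q' r.  Testing the equation itself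
   against r' yields  int (h - 3 eps Gam'/4) r'^2 = int (eps/2 Gam'' - h') r r'
   + eps/2 int Q'' r'.  When h >= a and eps Gam' <= 2a/3 both weights are bounded
   below, and Cauchy--Schwarz gives |r| <= 3 eps/(5a) |Q'| and
   a/2 |r'| <= b |r| + eps/2 |Q''|, where b bounds |eps/2 Gam'' - h'|. *)

(* Derivative rules for pointwise combinations, stated in the [fun y => ...]
   shape in which the functions occur, so that they apply by unification. *)
Lemma dlim_plus f g x l1 l2 : derivable_pt_lim f x l1 -> derivable_pt_lim g x l2 ->
  derivable_pt_lim (fun y => f y + g y) x (l1 + l2).
Proof. intros; apply (derivable_pt_lim_plus f g); auto. Qed.

Lemma dlim_minus f g x l1 l2 : derivable_pt_lim f x l1 -> derivable_pt_lim g x l2 ->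
  derivable_pt_lim (fun y => f y - g y) x (l1 - l2).
Proof. intros; apply (derivable_pt_lim_minus f g); auto. Qed.

Lemma dlim_mult f g x l1 l2 : derivable_pt_lim f x l1 -> derivable_pt_lim g x l2 ->
  derivable_pt_lim (fun y => f y * g y) x (l1 * g x + f x * l2).
Proof. intros; apply (derivable_pt_lim_mult f g); auto. Qed.

Lemma dlim_const (c x : R) : derivable_pt_lim (fun _ => c) x 0.
Proof. apply derivable_pt_lim_const. Qed.

Lemma dlim_value f x l l' : derivable_pt_lim f x l -> l = l' -> derivable_pt_lim f x l'.
Proof. now intros H <-. Qed.

(* Proves [derivable_pt_lim F x l] for a combination F of functions with known
   derivatives; the value of the derivative is left as an equation for [ring].
   Subtraction is tried before addition since [x - y] unfolds to [x + - y]. *)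
Ltac derive :=
  eapply dlim_value;
  [ repeat first [ apply dlim_minus | apply dlim_plus | apply dlim_mult | apply dlim_const
                 | match goal with H : forall x, derivable_pt_lim ?f x _
                                   |- derivable_pt_lim ?f _ _ => apply H end ]
  | ].

Lemma cont_plus f g : continuity f -> continuity g -> continuity (fun y => f y + g y).
Proof. intros; apply (continuity_plus f g); auto. Qed.

Lemma cont_minus f g : continuity f -> continuity g -> continuity (fun y => f y - g y).
Proof. intros; apply (continuity_minus f g); auto. Qed.

Lemma cont_mult f g : continuity f -> continuity g -> continuity (fun y => f y * g y).
Proof. intros; apply (continuity_mult f g); auto. Qed.

Lemma cont_const (c : R) : continuity (fun _ => c).
Proof. apply continuity_const; intros ? ?; auto. Qed.

Lemma cont_abs f : continuity f -> continuity (fun y => Rabs (f y)).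
Proof. intros H x; exact (continuity_pt_comp f Rabs x (H x) (Rcontinuity_abs _)). Qed.

Lemma cont_sqr f : continuity f -> continuity (fun y => f y ^ 2).
Proof.
  intros H. replace (fun y => f y ^ 2) with (fun y => f y * f y)
    by (apply functional_extensionality; intros; ring).
  apply cont_mult; auto.
Qed.

Lemma cont_of_derivative f f1 : (forall x, derivable_pt_lim f x (f1 x)) -> continuity f.
Proof. intros H x; apply derivable_continuous_pt; exists (f1 x); apply H. Qed.

Ltac cont :=
  repeat first [ apply cont_minus | apply cont_plus | apply cont_mult | apply cont_const
               | apply cont_abs | apply cont_sqr | assumption ].

Lemma periodic_derivative r r1 :
  periodic1 r -> (forall x, derivable_pt_lim r x (r1 x)) -> r1 0 = r1 1.
Proof.
  intros Hp Hd.
  assert (Hshift : derivable_pt_lim (comp r (fun x => x + 1)) 0 (r1 (0 + 1) * 1)).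
  { apply derivable_pt_lim_comp; [| apply Hd].
    derive; [apply derivable_pt_lim_id | ring]. }
  replace (comp r (fun x => x + 1)) with r in Hshift
    by (apply functional_extensionality; intros; unfold comp; rewrite Hp; auto).
  rewrite Rplus_0_l, Rmult_1_r in Hshift.
  exact (uniqueness_limite _ _ _ _ (Hd 0) Hshift).
Qed.

Lemma constant_of_zero_derivative f :
  (forall x, derivable_pt_lim f x 0) -> forall x, 0 <= x <= 1 -> f x = f 0.
Proof.
  intros Hd x [H0 _]. destruct (Rle_lt_or_eq_dec 0 x H0) as [Hx | <-]; auto.
  symmetry; apply (eq_is_derive f 0 x); auto.
  intros; apply is_derive_Reals, Hd.
Qed.

Lemma continuous_of_continuity f : continuity f -> forall x, continuous f x.
Proof. intros H x; apply continuity_pt_filterlim, H. Qed.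

Lemma ex_RInt01 f : continuity f -> ex_RInt f 0 1.
Proof.
  intros H; apply (@ex_RInt_continuous R_CompleteNormedModule).
  intros; apply continuous_of_continuity, H.
Qed.

Lemma is_RInt01 f : continuity f -> is_RInt f 0 1 (RInt f 0 1).
Proof. intros H; apply (@RInt_correct R_CompleteNormedModule), ex_RInt01, H. Qed.

Lemma is_RInt01_derivative f df :
  (forall x, derivable_pt_lim f x (df x)) -> continuity df -> f 0 = f 1 ->
  is_RInt df 0 1 0.
Proof.
  intros Hd Hc Hper.
  assert (H : is_RInt df 0 1 (minus (f 1) (f 0))).
  { apply (@is_RInt_derive R_CompleteNormedModule); intros.
    - apply is_derive_Reals, Hd.
    - apply continuous_of_continuity, Hc. }
  rewrite Hper in H; unfold minus, plus, opp in H; simpl in H.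
  now rewrite Rplus_opp_r in H.
Qed.

Lemma is_RInt01_comb3 f g k If Ig Ik (a b c : R) :
  is_RInt f 0 1 If -> is_RInt g 0 1 Ig -> is_RInt k 0 1 Ik ->
  is_RInt (fun x => a * f x + b * g x + c * k x) 0 1 (a * If + b * Ig + c * Ik).
Proof.
  intros Hf Hg Hk.
  exact (is_RInt_plus _ _ _ _ _ _
           (is_RInt_plus _ _ _ _ _ _ (is_RInt_scal _ _ _ a _ Hf) (is_RInt_scal _ _ _ b _ Hg))
           (is_RInt_scal _ _ _ c _ Hk)).
Qed.

Lemma is_RInt01_ge0 f I : is_RInt f 0 1 I -> (forall x, 0 <= f x) -> 0 <= I.
Proof.
  intros H Hf.
  pose proof (is_RInt_scal _ _ _ 0 _ H) as H0.
  replace 0 with (0 * I) at 1 by ring.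
  apply (is_RInt_le _ _ 0 1 _ _ Rle_0_1 H0 H).
  intros x _; change (0 * f x <= f x); rewrite Rmult_0_l; auto.
Qed.

Lemma RInt01_ext (f g : R -> R) :
  (forall x, 0 <= x <= 1 -> f x = g x) -> RInt f 0 1 = RInt g 0 1.
Proof.
  intros H; apply RInt_ext; intros x Hx.
  rewrite Rmin_left, Rmax_right in Hx by lra; apply H; lra.
Qed.

Lemma RInt01_le f g : continuity f -> continuity g ->
  (forall x, 0 <= x <= 1 -> f x <= g x) -> RInt f 0 1 <= RInt g 0 1.
Proof.
  intros Hf Hg Hfg; apply RInt_le; try apply ex_RInt01; auto; [lra |].
  intros x Hx; apply Hfg; lra.
Qed.

Lemma RInt01_scal f c : continuity f -> RInt (fun x => c * f x) 0 1 = c * RInt f 0 1.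
Proof. intros H; exact (RInt_scal f 0 1 c (ex_RInt01 f H)). Qed.

Lemma nonneg_quadratic_discriminant F G I :
  0 <= F -> 0 <= G -> (forall t, 0 <= F + 2 * t * I + t ^ 2 * G) ->
  I <= sqrt F * sqrt G.
Proof.
  intros HF HG Hq.
  assert (Hsq : I ^ 2 <= F * G).
  { destruct (Rle_lt_or_eq_dec 0 G HG) as [Gpos | <-].
    - specialize (Hq (- I / G)).
      replace (F + 2 * (- I / G) * I + (- I / G) ^ 2 * G) with ((F * G - I ^ 2) / G)
        in Hq by (field; lra).
      apply Rmult_le_compat_r with (r := G) in Hq; [| lra].
      unfold Rdiv in Hq; rewrite Rmult_0_l, Rmult_assoc, Rinv_l, Rmult_1_r in Hq; lra.
    - destruct (Req_dec I 0) as [-> | HI]; [lra |].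
      specialize (Hq (- (F + 1) / (2 * I))).
      replace (F + 2 * (- (F + 1) / (2 * I)) * I + (- (F + 1) / (2 * I)) ^ 2 * 0) with (-1)
        in Hq by (field; auto). lra. }
  rewrite <- sqrt_mult_alt by auto.
  apply Rle_trans with (Rabs I); [apply Rle_abs |].
  rewrite <- sqrt_Rsqr_abs; apply sqrt_le_1_alt; unfold Rsqr; lra.
Qed.

Definition l2norm (f : R -> R) : R := sqrt (RInt (fun x => f x ^ 2) 0 1).

Lemma l2norm_sqr f : continuity f -> l2norm f * l2norm f = RInt (fun x => f x ^ 2) 0 1.
Proof.
  intros H; apply sqrt_sqrt.
  apply (is_RInt01_ge0 _ _ (is_RInt01 _ (cont_sqr _ H))); intros; apply pow2_ge_0.
Qed.

Lemma L2norm_l2norm f (pr : Riemann_integrable (fun x => f x ^ 2) 0 1) :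
  L2norm f pr = l2norm f.
Proof. unfold L2norm, l2norm; now rewrite (RInt_Reals _ _ _ pr). Qed.

Lemma RInt01_Cauchy_Schwarz f g : continuity f -> continuity g ->
  RInt (fun x => Rabs (f x * g x)) 0 1 <= l2norm f * l2norm g.
Proof.
  intros Hf Hg.
  pose proof (is_RInt01 _ (cont_sqr _ Hf)) as IF.
  pose proof (is_RInt01 _ (cont_sqr _ Hg)) as IG.
  pose proof (is_RInt01 (fun x => Rabs (f x * g x)) ltac:(cont)) as II.
  unfold l2norm; apply nonneg_quadratic_discriminant.
  - apply (is_RInt01_ge0 _ _ IF); intros; apply pow2_ge_0.
  - apply (is_RInt01_ge0 _ _ IG); intros; apply pow2_ge_0.
  - intros t.
    assert (Hsquare : forall x, 1 * f x ^ 2 + (2 * t) * Rabs (f x * g x) + t ^ 2 * g x ^ 2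
                                = (Rabs (f x) + t * Rabs (g x)) ^ 2).
    { intros x; rewrite Rabs_mult, <- (pow2_abs (f x)), <- (pow2_abs (g x)); ring. }
    apply (is_RInt01_ge0 (fun x => (Rabs (f x) + t * Rabs (g x)) ^ 2));
      [| intros; apply pow2_ge_0].
    apply (is_RInt_ext _ _ _ _ _ (fun x _ => Hsquare x)).
    replace (RInt (fun x => f x ^ 2) 0 1) with (1 * RInt (fun x => f x ^ 2) 0 1) by ring.
    apply is_RInt01_comb3; auto.
Qed.

Lemma RInt01_mult_le f g : continuity f -> continuity g ->
  RInt (fun x => f x * g x) 0 1 <= l2norm f * l2norm g.
Proof.
  intros Hf Hg; eapply Rle_trans; [| apply RInt01_Cauchy_Schwarz; auto].
  apply RInt01_le; [cont | cont | intros; apply Rle_abs].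
Qed.

Lemma le_of_quadratic_le c d y : 0 < c -> 0 <= d -> 0 <= y -> c * (y * y) <= d * y -> y <= d / c.
Proof.
  intros Hc Hd Hy H. apply (Rmult_le_reg_l c); auto.
  replace (c * (d / c)) with d by (field; lra).
  destruct (Rle_lt_or_eq_dec 0 y Hy) as [Hpos | <-]; [| nra].
  apply (Rmult_le_reg_r y); lra.
Qed.

(* The equation eps/2 (Gam r)'' - (h r)' = -eps/2 Q2,
   with Q2 the derivative of Q1, is given with the product derivatives expanded;
   the coefficient bounds are assumed on one period [0,1]. *)
Section EnergyEstimates.

Variables (h h1 Gam Gam1 Gam2 Q1 Q2 r r1 r2 : R -> R) (eps a b : R).
Hypotheses (Dh : forall x, derivable_pt_lim h x (h1 x)) (Ch1 : continuity h1)
  (DG : forall x, derivable_pt_lim Gam x (Gam1 x))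
  (DG1 : forall x, derivable_pt_lim Gam1 x (Gam2 x)) (CG2 : continuity Gam2)
  (Dr : forall x, derivable_pt_lim r x (r1 x))
  (Dr1 : forall x, derivable_pt_lim r1 x (r2 x)) (Cr2 : continuity r2)
  (DQ : forall x, derivable_pt_lim Q1 x (Q2 x)) (CQ2 : continuity Q2).
Hypothesis equation : forall x,
  eps / 2 * (Gam2 x * r x + 2 * Gam1 x * r1 x + Gam x * r2 x) - (h1 x * r x + h x * r1 x)
  = - (eps / 2) * Q2 x.
Hypotheses (Gam_per : Gam 0 = Gam 1) (r_per : r 0 = r 1) (r1_per : r1 0 = r1 1)
  (r_mean : RInt r 0 1 = 0).
Hypotheses (eps_pos : 0 < eps) (a_pos : 0 < a)
  (h_lower : forall x, 0 <= x <= 1 -> a <= h x)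
  (Gam1_upper : forall x, 0 <= x <= 1 -> eps * Gam1 x <= 2 * a / 3)
  (coef_bound : forall x, 0 <= x <= 1 -> Rabs (eps / 2 * Gam2 x - h1 x) <= b).

Let Ch := cont_of_derivative _ _ Dh.
Let CG := cont_of_derivative _ _ DG.
Let CG1 := cont_of_derivative _ _ DG1.
Let Cr := cont_of_derivative _ _ Dr.
Let Cr1 := cont_of_derivative _ _ Dr1.
Let CQ1 := cont_of_derivative _ _ DQ.

(* Integrating the equation once: the flux eps/2 (Gam r)' - h r + eps/2 Q1 is constant. *)
Lemma flux_constant : forall x, 0 <= x <= 1 ->
  eps / 2 * (Gam1 x * r x + Gam x * r1 x) - h x * r x + eps / 2 * Q1 x
  = eps / 2 * (Gam1 0 * r 0 + Gam 0 * r1 0) - h 0 * r 0 + eps / 2 * Q1 0.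
Proof.
  apply (constant_of_zero_derivative
           (fun x => eps / 2 * (Gam1 x * r x + Gam x * r1 x) - h x * r x + eps / 2 * Q1 x)).
  intros x; derive; pose proof (equation x); lra.
Qed.

(* Testing the once-integrated equation against r (using mean r = 0) gives
   int (h - eps Gam'/4) r^2 = eps/2 int Q1 r; the term Gam r r' is integrated by
   parts through the derivative dGr2 of Gam r^2 / 2.  (The equation is stated at
   type R rather than at Coquelicot's module type, so that [ring] applies.) *)
Lemma first_energy_identity :
  RInt (fun x => (h x - eps / 4 * Gam1 x) * r x ^ 2) 0 1
  = eps / 2 * RInt (fun x => Q1 x * r x) 0 1 :> R.
Proof.
  set (k := eps / 2 * (Gam1 0 * r 0 + Gam 0 * r1 0) - h 0 * r 0 + eps / 2 * Q1 0).
  set (dGr2 := fun x => / 2 * (Gam1 x * (r x * r x) + Gam x * (r1 x * r x + r x * r1 x))).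
  assert (I_dGr2 : is_RInt dGr2 0 1 0).
  { apply (is_RInt01_derivative (fun x => / 2 * (Gam x * (r x * r x)))).
    - intros x; derive; unfold dGr2; ring.
    - unfold dGr2; cont.
    - rewrite Gam_per, r_per; auto. }
  pose proof (is_RInt01 r Cr) as I_r; rewrite r_mean in I_r.
  pose proof (is_RInt01_comb3 _ _ _ _ _ _ (eps / 2) (- k) (eps / 2)
                (is_RInt01 (fun x => Q1 x * r x) ltac:(cont)) I_r I_dGr2) as I_sum.
  rewrite (RInt01_ext _ (fun x => eps / 2 * (Q1 x * r x) + - k * r x + eps / 2 * dGr2 x)).
  - rewrite (is_RInt_unique _ _ _ _ I_sum); ring.
  - intros x Hx; pose proof (flux_constant x Hx) as Hflux; fold k in Hflux.
    unfold dGr2; rewrite <- Hflux; field.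
Qed.

(* Testing the equation against r' gives
   int (h - 3 eps Gam'/4) r'^2 = int (eps/2 Gam'' - h') r r' + eps/2 int Q2 r',
   integrating Gam r'' r' by parts through the derivative dGr12 of Gam r'^2 / 2. *)
Lemma second_energy_identity :
  RInt (fun x => (h x - 3 * eps / 4 * Gam1 x) * r1 x ^ 2) 0 1
  = RInt (fun x => (eps / 2 * Gam2 x - h1 x) * (r x * r1 x)) 0 1
    + eps / 2 * RInt (fun x => Q2 x * r1 x) 0 1 :> R.
Proof.
  set (dGr12 := fun x => / 2 * (Gam1 x * (r1 x * r1 x) + Gam x * (r2 x * r1 x + r1 x * r2 x))).
  assert (I_dGr12 : is_RInt dGr12 0 1 0).
  { apply (is_RInt01_derivative (fun x => / 2 * (Gam x * (r1 x * r1 x)))).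
    - intros x; derive; unfold dGr12; ring.
    - unfold dGr12; cont.
    - rewrite Gam_per, r1_per; auto. }
  pose proof (is_RInt01_comb3 _ _ _ _ _ _ 1 (eps / 2) (eps / 2)
                (is_RInt01 (fun x => (eps / 2 * Gam2 x - h1 x) * (r x * r1 x)) ltac:(cont))
                (is_RInt01 (fun x => Q2 x * r1 x) ltac:(cont)) I_dGr12) as I_sum.
  rewrite (RInt01_ext _ (fun x => 1 * ((eps / 2 * Gam2 x - h1 x) * (r x * r1 x))
                                + eps / 2 * (Q2 x * r1 x) + eps / 2 * dGr12 x)).
  - rewrite (is_RInt_unique _ _ _ _ I_sum); ring.
  - intros x _; pose proof (Rmult_eq_compat_l (r1 x) _ _ (equation x)); unfold dGr12; lra.
Qed.

(* Since eps Gam' <= 2a/3, the weight h - eps Gam'/4 is at least 5a/6, so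
   5a/6 |r|^2 <= eps/2 |Q1| |r|. *)
Lemma first_energy_bound : l2norm r <= 3 * eps / (5 * a) * l2norm Q1.
Proof.
  assert (Hlow : 5 * a / 6 * (l2norm r * l2norm r)
                 <= RInt (fun x => (h x - eps / 4 * Gam1 x) * r x ^ 2) 0 1).
  { rewrite l2norm_sqr, <- RInt01_scal by cont.
    apply RInt01_le; [cont | cont |].
    intros x Hx; apply Rmult_le_compat_r; [apply pow2_ge_0 |].
    pose proof (h_lower x Hx); pose proof (Gam1_upper x Hx); lra. }
  rewrite first_energy_identity in Hlow.
  pose proof (RInt01_mult_le Q1 r CQ1 Cr) as HCS.
  replace (3 * eps / (5 * a) * l2norm Q1) with (eps / 2 * l2norm Q1 / (5 * a / 6))
    by (field; lra).
  apply le_of_quadratic_le; try apply sqrt_pos.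
  - lra.
  - apply Rmult_le_pos; [lra | apply sqrt_pos].
  - apply Rmult_le_compat_l with (r := eps / 2) in HCS; lra.
Qed.

(* Since eps Gam' <= 2a/3, the weight h - 3 eps Gam'/4 is at least a/2, so
   a/2 |r'|^2 <= b |r| |r'| + eps/2 |Q2| |r'|. *)
Lemma second_energy_bound : l2norm r1 <= (b * l2norm r + eps / 2 * l2norm Q2) / (a / 2).
Proof.
  assert (b_nonneg : 0 <= b).
  { eapply Rle_trans; [apply Rabs_pos | apply (coef_bound 0); lra]. }
  assert (Hlow : a / 2 * (l2norm r1 * l2norm r1)
                 <= RInt (fun x => (h x - 3 * eps / 4 * Gam1 x) * r1 x ^ 2) 0 1).
  { rewrite l2norm_sqr, <- RInt01_scal by cont.
    apply RInt01_le; [cont | cont |].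
    intros x Hx; apply Rmult_le_compat_r; [apply pow2_ge_0 |].
    pose proof (h_lower x Hx); pose proof (Gam1_upper x Hx); lra. }
  rewrite second_energy_identity in Hlow.
  assert (Hcoef : RInt (fun x => (eps / 2 * Gam2 x - h1 x) * (r x * r1 x)) 0 1
                  <= b * (l2norm r * l2norm r1)).
  { eapply Rle_trans; [| apply Rmult_le_compat_l, RInt01_Cauchy_Schwarz; auto].
    rewrite <- RInt01_scal by cont.
    apply RInt01_le; [cont | cont |]. intros x Hx.
    eapply Rle_trans; [apply Rle_abs |]; rewrite Rabs_mult.
    apply Rmult_le_compat_r; [apply Rabs_pos | auto]. }
  pose proof (RInt01_mult_le Q2 r1 CQ2 Cr1) as HCS.
  apply le_of_quadratic_le; try apply sqrt_pos.
  - lra.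
  - apply Rplus_le_le_0_compat; apply Rmult_le_pos; try apply sqrt_pos; lra.
  - apply Rmult_le_compat_l with (r := eps / 2) in HCS; lra.
Qed.

(* Combining the two bounds (note 6/5 <= 2). *)
Lemma energy_estimate : l2norm r1 <= eps * (2 * b / a ^ 2 * l2norm Q1 + 1 / a * l2norm Q2).
Proof.
  assert (b_nonneg : 0 <= b).
  { eapply Rle_trans; [apply Rabs_pos | apply (coef_bound 0); lra]. }
  pose proof first_energy_bound as Hr. pose proof second_energy_bound as Hr1.
  pose proof (sqrt_pos (RInt (fun x => Q1 x ^ 2) 0 1)) as HQ1; fold (l2norm Q1) in HQ1.
  apply Rmult_le_compat_l with (r := b) in Hr; auto.
  eapply Rle_trans; [exact Hr1 |].
  apply (Rmult_le_reg_l (a / 2)); [lra |].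
  replace (a / 2 * ((b * l2norm r + eps / 2 * l2norm Q2) / (a / 2)))
    with (b * l2norm r + eps / 2 * l2norm Q2) by (field; lra).
  replace (a / 2 * (eps * (2 * b / a ^ 2 * l2norm Q1 + 1 / a * l2norm Q2)))
    with (eps * b / a * l2norm Q1 + eps / 2 * l2norm Q2) by (field; lra).
  replace (b * (3 * eps / (5 * a) * l2norm Q1)) with (3 / 5 * (eps * b / a * l2norm Q1)) in Hr
    by (field; lra).
  assert (0 <= eps * b / a * l2norm Q1).
  { apply Rmult_le_pos; auto. unfold Rdiv; apply Rmult_le_pos; [nra | apply Rlt_le, Rinv_0_lt_compat; lra]. }
  lra.
Qed.

End EnergyEstimates.

(* The energy estimate for a solution in the form of the theorem: the derivatives
   of the products Gam r and h r are identified by the product rule, and the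
   boundary values at 0 and 1 come from periodicity. *)
Lemma solution_estimate (h h1 h2 Gam Gam1 Gam2 Q Q1 Q2 r r1 r2 G1 G2 K1 : R -> R)
  (eps a b : R) :
  periodic1 Gam -> is_C2 h h1 h2 -> is_C2 Gam Gam1 Gam2 -> is_C2 Q Q1 Q2 ->
  periodic1 r -> is_C2 r r1 r2 ->
  is_C2 (fun x => Gam x * r x) G1 G2 -> is_C1 (fun x => h x * r x) K1 ->
  (forall x, eps / 2 * G2 x - K1 x = - (eps / 2) * Q2 x) ->
  (exists pr : Riemann_integrable r 0 1, RiemannInt pr = 0) ->
  0 < eps -> 0 < a ->
  (forall x, 0 <= x <= 1 -> a <= h x) ->
  (forall x, 0 <= x <= 1 -> eps * Gam1 x <= 2 * a / 3) ->
  (forall x, 0 <= x <= 1 -> Rabs (eps / 2 * Gam2 x - h1 x) <= b) ->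
  l2norm r1 <= eps * (2 * b / a ^ 2 * l2norm Q1 + 1 / a * l2norm Q2).
Proof.
  intros Gam_per [Dh [Dh1 _]] [DG [DG1 CG2]] [_ [DQ CQ2]] r_per [Dr [Dr1 Cr2]]
    [DGr [DGr1 _]] [DK _] Heq [pr r_mean].
  assert (EG1 : G1 = fun x => Gam1 x * r x + Gam x * r1 x).
  { apply functional_extensionality; intros x.
    apply (uniqueness_limite _ x _ _ (DGr x)); derive; ring. }
  subst G1.
  assert (EG2 : forall x, G2 x = Gam2 x * r x + 2 * Gam1 x * r1 x + Gam x * r2 x).
  { intros x; apply (uniqueness_limite _ x _ _ (DGr1 x)); derive; ring. }
  assert (EK1 : forall x, K1 x = h1 x * r x + h x * r1 x).
  { intros x; apply (uniqueness_limite _ x _ _ (DK x)); derive; ring. }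
  rewrite <- RInt_Reals in r_mean.
  apply (energy_estimate h h1 Gam Gam1 Gam2 Q1 Q2 r r1 r2); auto.
  - exact (cont_of_derivative _ _ Dh1).
  - intros x; rewrite <- Heq, EG2, EK1; ring.
  - rewrite <- (Rplus_0_l 1), Gam_per; auto.
  - rewrite <- (Rplus_0_l 1), r_per; auto.
  - exact (periodic_derivative r r1 r_per Dr).
Qed.

(* Bounds for the qualitative statement: extreme values of the continuous
   coefficients on [0,1] give admissible a, b and a threshold eps0. *)
Lemma uniform_coefficient_bounds (h h1 Gam1 Gam2 : R -> R) :
  continuity h -> continuity h1 -> continuity Gam1 -> continuity Gam2 ->
  (forall x, 0 < h x) ->
  exists a b eps0, 0 < a /\ 0 < eps0 /\ (forall x, 0 <= x <= 1 -> a <= h x) /\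
    forall eps, 0 < eps < eps0 -> forall x, 0 <= x <= 1 ->
      eps * Gam1 x <= 2 * a / 3 /\ Rabs (eps / 2 * Gam2 x - h1 x) <= b.
Proof.
  intros Ch Ch1 CG1 CG2 h_pos.
  destruct (continuity_ab_min h 0 1 Rle_0_1 (fun x _ => Ch x)) as [xh [Hxh _]].
  destruct (continuity_ab_maj Gam1 0 1 Rle_0_1 (fun x _ => CG1 x)) as [xG [HxG _]].
  destruct (continuity_ab_maj (fun x => Rabs (Gam2 x)) 0 1 Rle_0_1
              (fun x _ => cont_abs _ CG2 x)) as [xG2 [HxG2 _]].
  destruct (continuity_ab_maj (fun x => Rabs (h1 x)) 0 1 Rle_0_1
              (fun x _ => cont_abs _ Ch1 x)) as [xh1 [Hxh1 _]].
  set (a := h xh); set (M := Rabs (Gam1 xG) + 1).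
  assert (a_pos : 0 < a) by apply h_pos.
  assert (M_pos : 0 < M) by (pose proof (Rabs_pos (Gam1 xG)); unfold M; lra).
  exists a, (Rabs (h1 xh1) + Rabs (Gam2 xG2) / 2), (Rmin 1 (2 * a / (3 * M))).
  split; [auto | split; [| split; [auto |]]].
  - apply Rmin_glb_lt; [lra | apply Rdiv_lt_0_compat; lra].
  - intros eps [eps_pos Heps] x Hx.
    pose proof (Rlt_le_trans _ _ _ Heps (Rmin_l _ _)) as eps_lt1.
    pose proof (Rlt_le_trans _ _ _ Heps (Rmin_r _ _)) as eps_ltM.
    split.
    + apply Rle_trans with (eps * M).
      * apply Rmult_le_compat_l; [lra |].
        pose proof (HxG x Hx); pose proof (Rle_abs (Gam1 xG)); unfold M; lra.
      * apply (Rmult_lt_compat_r M) in eps_ltM; [| lra].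
        replace (2 * a / (3 * M) * M) with (2 * a / 3) in eps_ltM by (field; lra); lra.
    + unfold Rminus; eapply Rle_trans; [apply Rabs_triang |].
      rewrite Rabs_Ropp, Rabs_mult, (Rabs_right (eps / 2)) by lra.
      pose proof (HxG2 x Hx); pose proof (Hxh1 x Hx); pose proof (Rabs_pos (Gam2 x)).
      assert (eps / 2 * Rabs (Gam2 x) <= 1 / 2 * Rabs (Gam2 xG2))
        by (apply Rmult_le_compat; lra).
      lra.
Qed.

Lemma constant_derivatives (Gam Gam1 Gam2 : R -> R) :
  (forall x, derivable_pt_lim Gam x (Gam1 x)) ->
  (forall x, derivable_pt_lim Gam1 x (Gam2 x)) ->
  (forall x y, Gam x = Gam y) -> forall x, Gam1 x = 0 /\ Gam2 x = 0.
Proof.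
  intros DG DG1 Hconst.
  assert (Z1 : forall x, Gam1 x = 0).
  { intros x; apply (uniqueness_limite Gam x); auto.
    replace Gam with (fun _ : R => Gam 0)
      by (apply functional_extensionality; intros; apply Hconst).
    apply dlim_const. }
  intros x; split; auto.
  apply (uniqueness_limite Gam1 x); auto.
  replace Gam1 with (fun _ : R => 0) by (apply functional_extensionality; intros; auto).
  apply dlim_const.
Qed.

(* Bounds for the explicit statement, with alpha = min h, M = max Gam' and beta as
   in the theorem; for nonconstant Gam, eps < 2 alpha/(3M) forces M > 0. *)
Lemma explicit_coefficient_bounds (h1 Gam Gam1 Gam2 : R -> R) (alpha M beta eps : R) :
  (forall x, derivable_pt_lim Gam x (Gam1 x)) ->
  (forall x, derivable_pt_lim Gam1 x (Gam2 x)) ->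
  0 < alpha -> is_max Gam1 M ->
  ((forall x y, Gam x = Gam y) -> is_max (fun x => Rabs (h1 x)) beta) ->
  (~ (forall x y, Gam x = Gam y) ->
     is_max (fun x => Rabs (h1 x) + alpha / (3 * M) * Rabs (Gam2 x)) beta) ->
  0 < eps -> (~ (forall x y, Gam x = Gam y) -> eps < 2 * alpha / (3 * M)) ->
  forall x, eps * Gam1 x <= 2 * alpha / 3 /\ Rabs (eps / 2 * Gam2 x - h1 x) <= beta.
Proof.
  intros DG DG1 alpha_pos [M_max _] Hconst_beta Hvar_beta eps_pos Heps x.
  destruct (classic (forall x y, Gam x = Gam y)) as [Hconst | Hvar].
  - destruct (constant_derivatives _ _ _ DG DG1 Hconst x) as [-> ->].
    destruct (Hconst_beta Hconst) as [Hbeta _].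
    split; [lra |].
    replace (eps / 2 * 0 - h1 x) with (- h1 x) by ring; rewrite Rabs_Ropp; apply Hbeta.
  - pose proof (Heps Hvar) as Heps'; destruct (Hvar_beta Hvar) as [Hbeta _].
    assert (M_pos : 0 < M).
    { destruct (Rlt_or_le 0 M) as [| HM]; auto; exfalso.
      assert (2 * alpha / (3 * M) <= 0); [| lra].
      destruct (Rle_lt_or_eq_dec M 0 HM) as [HM' | ->].
      - apply Rlt_le; unfold Rdiv; apply Rmult_pos_neg; [lra | apply Rinv_lt_0_compat; lra].
      - rewrite Rmult_0_r; unfold Rdiv; rewrite Rinv_0; lra. }
    apply (Rmult_lt_compat_r M) in Heps'; [| lra].
    replace (2 * alpha / (3 * M) * M) with (2 * alpha / 3) in Heps' by (field; lra).
    split.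
    + pose proof (M_max x); nra.
    + unfold Rminus; eapply Rle_trans; [apply Rabs_triang |].
      rewrite Rabs_Ropp, Rabs_mult, (Rabs_right (eps / 2)) by lra.
      assert (eps / 2 * Rabs (Gam2 x) <= alpha / (3 * M) * Rabs (Gam2 x)).
      { apply Rmult_le_compat_r; [apply Rabs_pos |].
        apply (Rmult_le_reg_r M); [lra |].
        replace (alpha / (3 * M) * M) with (alpha / 3) by (field; lra); lra. }
      pose proof (Hbeta x); simpl in *; lra.
Qed.

Theorem mainTheorem4
  (h h1 h2 Gam Gam1 Gam2 rho0 rho1 rho2 Q1 Q2 : R -> R) (c : R)
  (Hh_per : periodic1 h) (HG_per : periodic1 Gam) (Hrho_per : periodic1 rho0)
  (Hh : is_C2 h h1 h2) (HG : is_C2 Gam Gam1 Gam2) (Hrho : is_C2 rho0 rho1 rho2)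
  (Hhpos : forall x, 0 < h x) (HGpos : forall x, 0 < Gam x)
  (Hc : 0 < c) (Hrho0 : forall x, rho0 x = c / h x)
  (HQ : is_C2 (fun x => Gam x * rho0 x) Q1 Q2) :
  (* qualitative part *)
  (exists eps0 C : R, 0 < eps0 /\
     forall (eps : R) (r r1 r2 G1 G2 K1 : R -> R),
       0 < eps < eps0 ->
       periodic1 r -> is_C2 r r1 r2 ->
       is_C2 (fun x => Gam x * r x) G1 G2 ->
       is_C1 (fun x => h x * r x) K1 ->
       (forall x, eps / 2 * G2 x - K1 x = - (eps / 2) * Q2 x) ->
       (exists pr : Riemann_integrable r 0 1, RiemannInt pr = 0) ->
       forall pr1 : Riemann_integrable (fun x => r1 x ^ 2) 0 1,
         L2norm r1 pr1 <= C * eps)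
  /\
  (* explicit part *)
  (forall (alpha M beta : R),
     is_min h alpha ->
     is_max Gam1 M ->
     ((forall x y, Gam x = Gam y) ->
        is_max (fun x => Rabs (h1 x)) beta) ->
     (~ (forall x y, Gam x = Gam y) ->
        is_max (fun x => Rabs (h1 x) + alpha / (3 * M) * Rabs (Gam2 x)) beta) ->
     forall (eps : R) (r r1 r2 G1 G2 K1 : R -> R),
       0 < eps ->
       (~ (forall x y, Gam x = Gam y) -> eps < 2 * alpha / (3 * M)) ->
       periodic1 r -> is_C2 r r1 r2 ->
       is_C2 (fun x => Gam x * r x) G1 G2 ->
       is_C1 (fun x => h x * r x) K1 ->
       (forall x, eps / 2 * G2 x - K1 x = - (eps / 2) * Q2 x) ->
       (exists pr : Riemann_integrable r 0 1, RiemannInt pr = 0) ->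
       forall (pr1 : Riemann_integrable (fun x => r1 x ^ 2) 0 1)
              (prQ1 : Riemann_integrable (fun x => Q1 x ^ 2) 0 1)
              (prQ2 : Riemann_integrable (fun x => Q2 x ^ 2) 0 1),
         L2norm r1 pr1 <=
         eps * (2 * beta / alpha ^ 2 * L2norm Q1 prQ1 + 1 / alpha * L2norm Q2 prQ2)).
Proof.
  pose proof Hh as [Dh [Dh1 _]]; pose proof HG as [DG [DG1 CG2]].
  split.
  - destruct (uniform_coefficient_bounds h h1 Gam1 Gam2 (cont_of_derivative _ _ Dh)
                (cont_of_derivative _ _ Dh1) (cont_of_derivative _ _ DG1) CG2 Hhpos)
      as (a & b & eps0 & a_pos & eps0_pos & h_lower & coef_bounds).
    exists eps0, (2 * b / a ^ 2 * l2norm Q1 + 1 / a * l2norm Q2); split; auto.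
    intros eps r r1 r2 G1 G2 K1 Heps; intros.
    rewrite L2norm_l2norm, Rmult_comm.
    apply (solution_estimate h h1 h2 Gam Gam1 Gam2 (fun x => Gam x * rho0 x)
             Q1 Q2 r r1 r2 G1 G2 K1); auto; try lra; intros x Hx;
      apply (coef_bounds eps Heps x Hx).
  - intros alpha M beta [h_min [xmin alpha_eq]] M_max beta_const beta_var
      eps r r1 r2 G1 G2 K1 eps_pos Heps; intros.
    assert (alpha_pos : 0 < alpha) by (rewrite <- alpha_eq; auto).
    rewrite !L2norm_l2norm.
    apply (solution_estimate h h1 h2 Gam Gam1 Gam2 (fun x => Gam x * rho0 x)
             Q1 Q2 r r1 r2 G1 G2 K1); auto; intros x _;
      apply (explicit_coefficient_bounds h1 Gam Gam1 Gam2 alpha M beta eps); auto.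
Qed.
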